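(* Let $A$ be a commutative ring, $r,d\ge1$, $B=A[x_1,\dots,x_r]$, let $k\ge1$ and $\alpha\in\mathbb{N}^r\setminus\{0\}$ with $\gcd(\alpha)$ invertible in $A$. If $k|\alpha|\le d$, then $\gamma^k(x^\alpha)\times\gamma^{d-k}(1)\notin\Gamma^d_A(B)_{<k\alpha}$.
   Context: $\Gamma^d_A(B)$ is identified with $\mathrm{TS}^d_A(B)=(B^{\otimes_A d})^{\mathfrak S_d}$ (componentwise multiplication). For a monomial $f$, $\gamma^k(f)\times\gamma^{d-k}(1)=\sum_{S\subseteq\{1..d\},|S|=k}\bigotimes_{j}f_j$ with $f_j=f$ for $j\in S$, $f_j=1$ otherwise. $B^{\otimes d}$ is $\mathbb{N}^r$-graded by giving $x^{\beta_1}\otimes\dots\otimes x^{\beta_d}$ multidegree $\beta_1+\dots+\beta_d$. $\beta<\gamma$ means $\beta\le\gamma$ componentwise and $\beta\neq\gamma$; $\Gamma^d_A(B)_{<\gamma}$ is the $A$-subalgebra generated by homogeneous elements of multidegree $<\gamma$. *)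

From HB Require Import structures.
From mathcomp Require Import all_boot all_order all_algebra all_fingroup.
From mathcomp Require Import mpoly.
Set Implicit Arguments. Unset Strict Implicit. Unset Printing Implicit Defensive.
Import GRing.Theory.
Local Open Scope ring_scope.

(* B^{(x)_A d} is modelled as the polynomial
   ring in the d*r variables x_{j,i} (j : 'I_d the tensor slot, i : 'I_r),
   i.e. x^{b_1} (x) ... (x) x^{b_d}  <->  prod_j prod_i x_{j,i}^{b_j i}. *)

Definition nvar (d r : nat) : nat := #|{: 'I_d * 'I_r}|.

Notation tensB A d r := {mpoly A[nvar d r]}.

(* the variable x_{j,i}, i.e. 1 (x) .. (x) x_i (x) .. (x) 1 (x_i in slot j) *)
Definition tvar (A : nzRingType) (d r : nat) (j : 'I_d) (i : 'I_r) : tensB A d r :=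
  'X_(enum_rank (j, i)).

Definition slot_perm (A : nzRingType) (d r : nat) (s : 'S_d) (p : tensB A d r)
  : tensB A d r :=
  mmap (@mpolyC _ A)
    (fun k : 'I_(nvar d r) => @tvar A d r (s (enum_val k).1) (enum_val k).2) p.

Definition symmetric_tensor (A : nzRingType) (d r : nat) (p : tensB A d r) : Prop :=
  forall s : 'S_d, slot_perm s p = p.

Definition tmdeg (d r : nat) (m : 'X_{1..nvar d r}) : 'X_{1..r} :=
  [multinom (\sum_(j < d) m (enum_rank (j, i)))%N | i < r].

Definition thomog (A : nzRingType) (d r : nat) (beta : 'X_{1..r}) (p : tensB A d r)
  : Prop :=
  forall m, m \in msupp p -> tmdeg m = beta.

Definition mlt (r : nat) (beta gamma : 'X_{1..r}) : bool :=
  [forall i, (beta i <= gamma i)%N] && (beta != gamma).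

Inductive subalg_gen (A : nzRingType) (n : nat) (S : {mpoly A[n]} -> Prop)
  : {mpoly A[n]} -> Prop :=
| sg_const (a : A) : subalg_gen S a%:MP
| sg_gen p : S p -> subalg_gen S p
| sg_add p q : subalg_gen S p -> subalg_gen S q -> subalg_gen S (p + q)
| sg_mul p q : subalg_gen S p -> subalg_gen S q -> subalg_gen S (p * q).

Definition Gamma_lt (A : nzRingType) (d r : nat) (gamma : 'X_{1..r})
  : tensB A d r -> Prop :=
  subalg_gen (fun p => symmetric_tensor p /\
                 exists beta, thomog beta p /\ mlt beta gamma).

Definition slot_mono (A : nzRingType) (d r : nat) (j : 'I_d) (alpha : 'X_{1..r})
  : tensB A d r :=
  \prod_(i < r) @tvar A d r j i ^+ alpha i.

Definition gamma_prod (A : nzRingType) (d r k : nat) (alpha : 'X_{1..r})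
  : tensB A d r :=
  \sum_(S : {set 'I_d} | #|S| == k) \prod_(j in S) @slot_mono A d r j alpha.

Definition mscale (r k : nat) (alpha : 'X_{1..r}) : 'X_{1..r} :=
  [multinom (k * alpha i)%N | i < r].

From HB Require Import structures.
From mathcomp Require Import all_boot all_order all_algebra all_fingroup.
From mathcomp Require Import mpoly zify.
Set Implicit Arguments. Unset Strict Implicit. Unset Printing Implicit Defensive.
Import GRing.Theory.
Local Open Scope ring_scope.

(* Since gcd(alpha) is invertible, some alpha_i0 is nonzero in A.  Consider the
   A-linear form L on B^{(x)d} sending a tensor monomial x^{b_1} (x) ... (x) x^{b_d}
   to (-1)^l (b_1)_i0 when b_1 + ... + b_d = k alpha and b_1, ..., b_l are exactly
   the nonzero factors, and to 0 otherwise.  The degree condition makes L vanish on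
   constants and on homogeneous elements of degree < k alpha, and L is nonzero on
   gamma^k(x^alpha) x gamma^{d-k}(1), where it equals (-1)^k alpha_i0.  The heart
   of the proof is that L(uv) = 0 for symmetric u, v without constant term, so
   that L vanishes on the whole algebra Gamma^d_A(B)_{<k alpha}.  Splitting
   (b_1 + b'_1)_i0 = (b_1)_i0 + (b'_1)_i0 writes L(uv) as two sums over pairs of
   monomials, and each vanishes by a sign-reversing involution: at the first slot
   h occupied by the second monomial, either split slot h of the sum into two
   consecutive slots, or merge it back with slot h - 1.  This changes l by one,
   and the symmetry of u and v makes the coefficients agree.  The hypothesis
   k |alpha| <= d guarantees that a free slot is available for the split. *)

Lemma sum_sign_reversing (V : zmodType) (T : finType) (G Q : pred T)
    (f g : T -> T) (W : T -> V) :
  (forall x, ~~ G x -> W x = 0) ->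
  (forall x, G x -> Q x -> [/\ G (f x), ~~ Q (f x), g (f x) = x & W (f x) = - W x]) ->
  (forall y, G y -> ~~ Q y -> [/\ G (g y), Q (g y) & f (g y) = y]) ->
  \sum_x W x = 0.
Proof.
move=> W0 fP gP; rewrite (bigID G) /= [X in _ + X]big1 ?addr0; last by move=> x /W0.
rewrite (bigID Q) /= [X in _ + X](reindex_onto f g) /=; last first.
  by move=> y /andP[Gy Qy]; have [_ _ ->] := gP y Gy Qy.
rewrite [X in _ + X](eq_big (fun x => G x && Q x) (fun x => - W x)) ?sumrN ?subrr //.
  move=> x; apply/idP/idP => [/andP[/andP[Gfx Qfx] /eqP <-]|/andP[Gx Qx]].
    by have [-> ->] := gP _ Gfx Qfx.
  by have [-> -> -> _] := fP x Gx Qx; rewrite eqxx.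
move=> x /andP[/andP[Gfx Qfx] /eqP fxK].
have [] := gP _ Gfx Qfx; rewrite fxK => Gx Qx _.
by have [_ _ _ ->] := fP x Gx Qx.
Qed.

Lemma natr_big_gcdn_eq0 (R : pzSemiRingType) (I : finType) (F : I -> nat) :
  (forall i, (F i)%:R = 0 :> R) -> (\big[gcdn/0%N]_i F i)%:R = 0 :> R.
Proof.
move=> F0; apply: (big_ind (fun x : nat => x%:R = 0 :> R)) => // a b a0 b0.
have [->|a_gt0] := posnP a; first by rewrite gcd0n.
have [u v Bezout _] := egcdnP b a_gt0.
by move/(congr1 (fun x : nat => x%:R : R)): Bezout; rewrite !natrD !natrM a0 b0 !mulr0 add0r.
Qed.

Lemma card_ord_lt (d l : nat) : (l <= d)%N -> #|[pred j : 'I_d | (j < l)%N]| = l.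
Proof.
move=> ld; rewrite -sum1_card.
rewrite (eq_bigl (fun j : 'I_d => true && (j < l)%N)) // (big_ord_narrow_cond ld).
by rewrite sum1_card card_ord.
Qed.

Section Slots.
Variables d r : nat.
Local Notation N := (nvar d r).
Implicit Types (m : 'X_{1..N}) (F : 'I_d -> 'X_{1..r}).

Definition slot m (j : 'I_d) : 'X_{1..r} := [multinom m (enum_rank (j, i)) | i < r].

Definition of_slots F : 'X_{1..N} := [multinom F (enum_val k).1 (enum_val k).2 | k < N].

Lemma slot_of_slots F j : slot (of_slots F) j = F j.
Proof. by apply/mnmP=> i; rewrite !mnmE enum_rankK. Qed.

Lemma slot_inj m1 m2 : slot m1 =1 slot m2 -> m1 = m2.
Proof.
move=> eq12; apply/mnmP=> k; have /mnmP/(_ (enum_val k).2) := eq12 (enum_val k).1.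
by rewrite !mnmE -surjective_pairing enum_valK.
Qed.

Lemma slotD m1 m2 j : slot (m1 + m2) j = (slot m1 j + slot m2 j)%MM.
Proof. by apply/mnmP=> i; rewrite !(mnmE, mnmDE). Qed.

Lemma slot0 j : slot 0%MM j = 0%MM.
Proof. by apply/mnmP=> i; rewrite !mnmE. Qed.

Lemma tmdegE m : tmdeg m = (\sum_(j < d) slot m j)%MM.
Proof. by apply/mnmP=> i; rewrite mnmE mnm_sumE; apply: eq_bigr=> j _; rewrite mnmE. Qed.

Lemma tmdegD m1 m2 : tmdeg (m1 + m2) = (tmdeg m1 + tmdeg m2)%MM.
Proof. by rewrite !tmdegE -big_split; apply: eq_bigr=> j _; rewrite slotD. Qed.

Lemma mdeg_slots m : mdeg m = (\sum_(j < d) mdeg (slot m j))%N.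
Proof.
rewrite mdegE (reindex (@enum_rank ('I_d * 'I_r)%type)) /=; last first.
  by exists enum_val=> x _; rewrite ?enum_rankK ?enum_valK.
rewrite (eq_bigr (fun p => m (enum_rank (p.1, p.2)))) => [|[] //].
rewrite -(pair_bigA _ (fun j i => m (enum_rank (j, i)))) /=.
by apply: eq_bigr=> j _; rewrite mdegE; apply: eq_bigr=> i _; rewrite mnmE.
Qed.

Lemma mdeg_tmdeg m : mdeg (tmdeg m) = mdeg m.
Proof. by rewrite tmdegE mdeg_sum mdeg_slots. Qed.

Definition mperm (s : 'S_d) m : 'X_{1..N} := of_slots (fun j => slot m (s j)).

Lemma slot_mperm s m j : slot (mperm s m) j = slot m (s j).
Proof. exact: slot_of_slots. Qed.

Lemma mpermK s : cancel (mperm s) (mperm (s^-1)%g).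
Proof. by move=> m; apply: slot_inj=> j; rewrite !slot_mperm permKV. Qed.

Lemma mperm0 s : mperm s 0%MM = 0%MM.
Proof. by apply: slot_inj=> j; rewrite slot_mperm !slot0. Qed.

Lemma mperm_eq0 s m : (mperm s m == 0%MM) = (m == 0%MM).
Proof. by apply/eqP/eqP=> [/(congr1 (mperm (s^-1)%g))|->]; rewrite ?mpermK mperm0. Qed.

Lemma mdeg_mperm s m : mdeg (mperm s m) = mdeg m.
Proof.
rewrite [LHS]mdeg_slots [RHS]mdeg_slots [RHS](reindex_inj (@perm_inj _ s)) /=.
by apply: eq_bigr=> j _; rewrite slot_mperm.
Qed.

Lemma tmdeg_mperm s m : tmdeg (mperm s m) = tmdeg m.
Proof.
rewrite !tmdegE [RHS](reindex_inj (@perm_inj _ s)) /=.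
by apply: eq_bigr=> j _; rewrite slot_mperm.
Qed.

End Slots.

Section SymmetricTensors.
Variables (A : comNzRingType) (d r : nat).
Local Notation N := (nvar d r).

HB.instance Definition _ (s : 'S_d) := GRing.RMorphism.copy (@slot_perm A d r s)
  (mmap (@mpolyC _ A) (fun k : 'I_N => @tvar A d r (s (enum_val k).1) (enum_val k).2)).

Lemma slot_permC (s : 'S_d) (a : A) : slot_perm s (a%:MP : tensB A d r) = a%:MP.
Proof. exact: mmapC. Qed.

Lemma slot_permX (s : 'S_d) (m : 'X_{1..N}) :
  slot_perm s ('X_[m] : tensB A d r) = 'X_[mperm (s^-1)%g m].
Proof.
rewrite /slot_perm mmapX /mmap1 /tvar [RHS]mpolyXE_id.
pose sig (k : 'I_N) := enum_rank (s (enum_val k).1, (enum_val k).2).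
pose sig' (k : 'I_N) := enum_rank ((s^-1)%g (enum_val k).1, (enum_val k).2).
have sigK : cancel sig sig'.
  by move=> k; rewrite /sig /sig' enum_rankK /= permK -surjective_pairing enum_valK.
rewrite [RHS](reindex_inj (can_inj sigK)); apply: eq_bigr=> k _.
by rewrite !mnmE /sig enum_rankK /= permK -surjective_pairing enum_valK.
Qed.

Lemma mcoeff_mperm (p : tensB A d r) s m :
  symmetric_tensor p -> p@_(mperm s m) = p@_m.
Proof.
move=> /(_ (s^-1)%g) {1}<-; rewrite {1}(mpolyE p) rmorph_sum [in RHS](mpolyE p) !raddf_sum.
apply: eq_bigr=> m' _; rewrite -mul_mpolyC rmorphM /= slot_permX invgK.
rewrite slot_permC !mcoeffCM !mcoeffX.
by rewrite (inj_eq (can_inj (mpermK s))).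
Qed.

End SymmetricTensors.

Section SlotCombinatorics.
Variables n r : nat.
Local Notation d := n.+1.
Local Notation N := (nvar d r).
Implicit Types (m : 'X_{1..N}) (p j : nat).

(* Applied to a monomial whose last slot is empty, [ins_slot p] inserts an empty
   slot at position p; [del_slot p] removes the empty slot at position p. *)
Definition ins_index p j : nat := if (j < p)%N then j else if j == p then n else j.-1.
Definition del_index p j : nat := if (j < p)%N then j else if j == n then p else j.+1.

Ltac index_cases := rewrite /ins_index /del_index; (repeat case: ifP); move=> *; lia.

Lemma ins_index_le p j : (j <= n)%N -> (ins_index p j <= n)%N.
Proof. index_cases. Qed.

Lemma del_index_le p j : (j <= n)%N -> (del_index p j <= n)%N.
Proof. index_cases. Qed.

Lemma ins_indexK p j : (j <= n)%N -> del_index p (ins_index p j) = j.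
Proof. index_cases. Qed.

Lemma del_indexK p j : (j <= n)%N -> ins_index p (del_index p j) = j.
Proof. index_cases. Qed.

Definition ins_ord p (j : 'I_d) : 'I_d := inord (ins_index p j).
Definition del_ord p (j : 'I_d) : 'I_d := inord (del_index p j).

Lemma ins_ordK p : cancel (ins_ord p) (del_ord p).
Proof.
move=> j; have jn : (j <= n)%N := ltn_ord j.
have ins_n := ins_index_le p jn.
by apply: val_inj; rewrite /ins_ord /del_ord /= !inordK // ins_indexK.
Qed.

Lemma del_ordK p : cancel (del_ord p) (ins_ord p).
Proof.
move=> j; have jn : (j <= n)%N := ltn_ord j.
have del_n := del_index_le p jn.
by apply: val_inj; rewrite /ins_ord /del_ord /= !inordK // del_indexK.
Qed.

Definition ins_slot p : 'S_d := perm (can_inj (ins_ordK p)).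
Definition del_slot p : 'S_d := perm (can_inj (del_ordK p)).

Definition slotn m j : 'X_{1..r} := slot m (inord j).

Lemma slotn_ord m (j : 'I_d) : slotn m j = slot m j.
Proof. by rewrite /slotn inord_val. Qed.

Lemma slotn0 m : slotn m 0 = slot m ord0.
Proof. exact: (slotn_ord m ord0). Qed.

Lemma slotnD_eq0 m1 m2 j :
  (slotn (m1 + m2) j != 0%MM) = (slotn m1 j != 0%MM) || (slotn m2 j != 0%MM).
Proof. by rewrite /slotn slotD mnmD_eq0 negb_and. Qed.

Lemma slotn_inj m1 m2 : (forall j, (j <= n)%N -> slotn m1 j = slotn m2 j) -> m1 = m2.
Proof.
move=> eq12; apply: slot_inj=> j; have jn : (j <= n)%N := ltn_ord j.
by rewrite -!slotn_ord eq12.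
Qed.

Lemma slotn_ins m p j :
  (j <= n)%N -> slotn (mperm (ins_slot p) m) j = slotn m (ins_index p j).
Proof. by move=> jn; rewrite /slotn slot_mperm permE /ins_ord inordK. Qed.

Lemma slotn_del m p j :
  (j <= n)%N -> slotn (mperm (del_slot p) m) j = slotn m (del_index p j).
Proof. by move=> jn; rewrite /slotn slot_mperm permE /del_ord inordK. Qed.

Lemma mperm_insK p m : mperm (del_slot p) (mperm (ins_slot p) m) = m.
Proof. by apply: slotn_inj=> j jn; rewrite slotn_del // slotn_ins ?del_indexK ?del_index_le. Qed.

Lemma mperm_delK p m : mperm (ins_slot p) (mperm (del_slot p) m) = m.
Proof. by apply: slotn_inj=> j jn; rewrite slotn_ins // slotn_del ?ins_indexK ?ins_index_le. Qed.

Definition nslots m : nat := #|[pred j : 'I_d | slot m j != 0%MM]|.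

Definition slots_prefix m : bool :=
  [forall j : 'I_d, (slot m j != 0%MM) == (j < nslots m)%N].

Lemma nslots_le m : (nslots m <= d)%N.
Proof. by rewrite /nslots (leq_trans (max_card _)) ?card_ord. Qed.

Lemma slots_prefixP m : slots_prefix m ->
  forall j, (j <= n)%N -> (slotn m j != 0%MM) = (j < nslots m)%N.
Proof. by move=> /forallP pm j jn; have /eqP := pm (inord j); rewrite inordK. Qed.

Lemma slots_prefixI m l : (l <= d)%N ->
  (forall j, (j <= n)%N -> (slotn m j != 0%MM) = (j < l)%N) ->
  slots_prefix m /\ nslots m = l.
Proof.
move=> ld nz_m; have nz_slot (j : 'I_d) : (slot m j != 0%MM) = (j < l)%N.
  by have jn : (j <= n)%N := ltn_ord j; rewrite -slotn_ord nz_m.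
have nsl : nslots m = l.
  by rewrite /nslots -(card_ord_lt ld); apply: eq_card=> j; rewrite !inE nz_slot.
by split=> //; apply/forallP=> j; rewrite nsl nz_slot.
Qed.

Definition first_slot m : nat := find (fun j => slotn m j != 0%MM) (iota 0 d).

Lemma first_slotP m : m != 0%MM ->
  [/\ (first_slot m <= n)%N, slotn m (first_slot m) != 0%MM
    & forall j, (j < first_slot m)%N -> slotn m j = 0%MM].
Proof.
move=> nz; have has_nz : has (fun j => slotn m j != 0%MM) (iota 0 d).
  apply/negPn/negP=> /hasPn all0; move/eqP: nz; apply; apply: slotn_inj=> j jn.
  by rewrite {2}/slotn slot0; apply/eqP/negPn; apply: all0; rewrite mem_iota.
have := has_nz; rewrite has_find size_iota => lt_first; split=> //.
  by have := nth_find 0 has_nz; rewrite nth_iota.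
move=> j lt_j; have := before_find 0 lt_j.
by rewrite nth_iota ?add0n ?(ltn_trans lt_j) // => /negbFE/eqP.
Qed.

Lemma first_slot_eq m h : (h <= n)%N -> slotn m h != 0%MM ->
  (forall j, (j < h)%N -> slotn m j = 0%MM) -> first_slot m = h.
Proof.
move=> hn nz_h below_h.
have [|_ nz_first below_first] := first_slotP (m := m).
  by apply: contra_neq nz_h => ->; rewrite /slotn slot0.
case: (ltngtP (first_slot m) h) => // lt_h.
  by move: nz_first; rewrite below_h ?eqxx.
by move: nz_h; rewrite below_first ?eqxx.
Qed.

Lemma split_slots m1 m2 l h :
  (l <= n)%N ->
  (forall j, (j <= n)%N -> (slotn (m1 + m2) j != 0%MM) = (j < l)%N) ->
  (h < l)%N -> slotn m1 h != 0%MM -> slotn m2 h != 0%MM ->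
  (forall j, (j < h)%N -> slotn m2 j = 0%MM) ->
  [/\ forall j, (j <= n)%N ->
        (slotn (mperm (ins_slot h.+1) m1 + mperm (ins_slot h) m2) j != 0%MM) = (j < l.+1)%N,
      first_slot (mperm (ins_slot h) m2) = h.+1,
      slotn (mperm (ins_slot h.+1) m1) h.+1 = 0%MM &
      slotn (mperm (ins_slot h.+1) m1) 0 = slotn m1 0].
Proof.
move=> ln nz_sum hl nz1 nz2 zero2.
have hn : (h <= n)%N by lia.
have := nz_sum n (leqnn n); rewrite slotnD_eq0 ltnNge ln /=.
move=> /norP[/negPn/eqP last1 /negPn/eqP last2].
split.
- move=> j jn; rewrite slotnD_eq0 !slotn_ins //.
  case: (ltngtP j h)=> [jh|hj|->].
  + have -> : ins_index h.+1 j = j by index_cases.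
    have -> : ins_index h j = j by index_cases.
    rewrite -slotnD_eq0 nz_sum //; lia.
  + case: (ltngtP j h.+1)=> [|hj2|->]; first by lia.
    * have -> : ins_index h.+1 j = j.-1 by index_cases.
      have -> : ins_index h j = j.-1 by index_cases.
      rewrite -slotnD_eq0 nz_sum; lia.
    * have -> : ins_index h.+1 h.+1 = n by index_cases.
      have -> : ins_index h h.+1 = h by index_cases.
      rewrite last1 nz2 orbT; lia.
  + have -> : ins_index h.+1 h = h by index_cases.
    have -> : ins_index h h = n by index_cases.
    rewrite nz1; lia.
- apply: first_slot_eq.
  + lia.
  + rewrite slotn_ins; last by lia.
    by have -> : ins_index h h.+1 = h by index_cases.
  + move=> j jh; rewrite slotn_ins; last by lia.
    case: (ltngtP j h)=> [jh2|hj|->].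
    * have -> : ins_index h j = j by index_cases.
      by rewrite zero2.
    * by lia.
    * by have -> : ins_index h h = n by index_cases.
- rewrite slotn_ins; last by lia.
  by have -> : ins_index h.+1 h.+1 = n by index_cases.
- by rewrite slotn_ins.
Qed.

Lemma merge_slots m1 m2 l h :
  (l <= d)%N ->
  (forall j, (j <= n)%N -> (slotn (m1 + m2) j != 0%MM) = (j < l)%N) ->
  (0 < h)%N -> (h < l)%N -> slotn m1 h = 0%MM -> slotn m2 h != 0%MM ->
  (forall j, (j < h)%N -> slotn m2 j = 0%MM) ->
  [/\ forall j, (j <= n)%N ->
        (slotn (mperm (del_slot h) m1 + mperm (del_slot h.-1) m2) j != 0%MM) = (j < l.-1)%N,
      first_slot (mperm (del_slot h.-1) m2) = h.-1,
      slotn (mperm (del_slot h) m1) h.-1 != 0%MM &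
      slotn (mperm (del_slot h) m1) 0 = slotn m1 0].
Proof.
move=> ld nz_sum h0 hl zero1 nz2 zero2.
have hn : (h <= n)%N by lia.
have nz1 : slotn m1 h.-1 != 0%MM.
  have := nz_sum h.-1 ltac:(lia); rewrite slotnD_eq0 zero2 ?eqxx ?orbF; last by lia.
  by move=> ->; lia.
split.
- move=> j jn; rewrite slotnD_eq0 !slotn_del //.
  case: (ltngtP j h.-1)=> [jh|hj|->].
  + have -> : del_index h j = j by index_cases.
    have -> : del_index h.-1 j = j by index_cases.
    rewrite -slotnD_eq0 nz_sum //; lia.
  + case: (ltngtP j n)=> [jn2||->]; last 2 first.
    * by lia.
    * have -> : del_index h n = h by index_cases.
      have -> : del_index h.-1 n = h.-1 by index_cases.
      rewrite zero1 zero2 ?eqxx /=; lia.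
    have -> : del_index h j = j.+1 by index_cases.
    have -> : del_index h.-1 j = j.+1 by index_cases.
    rewrite -slotnD_eq0 nz_sum; lia.
  + have -> : del_index h h.-1 = h.-1 by index_cases.
    have -> : del_index h.-1 h.-1 = h by index_cases.
    rewrite nz2 orbT; lia.
- apply: first_slot_eq.
  + lia.
  + rewrite slotn_del; last by lia.
    by have -> : del_index h.-1 h.-1 = h by index_cases.
  + move=> j jh; rewrite slotn_del; last by lia.
    have -> : del_index h.-1 j = j by index_cases.
    by rewrite zero2 //; lia.
- rewrite slotn_del; last by lia.
  by have -> : del_index h h.-1 = h.-1 by index_cases.
- rewrite slotn_del //.
  by have -> : del_index h 0 = 0 by index_cases.
Qed.

End SlotCombinatorics.

Section SplitMerge.
Variables (n r k : nat) (alpha : 'X_{1..r}).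
Local Notation d := n.+1.
Local Notation N := (nvar d r).
Local Notation ka := (mscale k alpha).
Implicit Types (m : 'X_{1..N}) (mm : 'X_{1..N} * 'X_{1..N}).

Lemma mdeg_mscale : mdeg ka = (k * mdeg alpha)%N.
Proof.
have -> : ka = (alpha *+ k)%MM by apply/mnmP=> i; rewrite mnmE mulmnE mulnC.
by rewrite mdegMn mulnC.
Qed.

Definition admissible m : bool := (tmdeg m == ka) && slots_prefix m.

Definition good_pair mm : bool :=
  [&& admissible (mm.1 + mm.2), slot mm.1 ord0 != 0%MM & mm.2 != 0%MM].

Definition splittable mm : bool := slotn mm.1 (first_slot mm.2) != 0%MM.

Definition split_pair mm : 'X_{1..N} * 'X_{1..N} :=
  (mperm (ins_slot n (first_slot mm.2).+1) mm.1, mperm (ins_slot n (first_slot mm.2)) mm.2).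

Definition merge_pair mm : 'X_{1..N} * 'X_{1..N} :=
  (mperm (del_slot n (first_slot mm.2)) mm.1, mperm (del_slot n (first_slot mm.2).-1) mm.2).

Hypothesis hk : (k * mdeg alpha <= d)%N.

(* A slot shared by both monomials has degree >= 2, so not all d slots of an
   admissible monomial of degree k |alpha| <= d can be occupied. *)
Lemma nslots_shared_slot m1 m2 h :
  admissible (m1 + m2) -> (h <= n)%N -> slotn m1 h != 0%MM -> slotn m2 h != 0%MM ->
  (nslots (m1 + m2) <= n)%N.
Proof.
move=> /andP[/eqP tm pre] hn nz1 nz2; rewrite leqNgt; apply/negP=> full.
have pos_slot (j : 'I_d) : (0 < mdeg (slot (m1 + m2) j))%N.
  have jn : (j <= n)%N := ltn_ord j.
  by rewrite lt0n mdeg_eq0 -slotn_ord (slots_prefixP pre) //; lia.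
have two_h : (2 <= mdeg (slotn (m1 + m2) h))%N.
  by move: nz1 nz2; rewrite /slotn slotD mdegD -!mdeg_eq0; lia.
have other_slots : (n <= \sum_(j < d | j != inord h) mdeg (slot (m1 + m2) j))%N.
  have := leq_sum (index_enum _) (fun (j : 'I_d) (_ : j != inord h) => pos_slot j).
  by rewrite sum1_card cardC1 card_ord.
have := mdeg_tmdeg (m1 + m2); rewrite tm mdeg_mscale mdeg_slots (bigD1 (inord h)) //=.
rewrite -/(slotn _ h); move: hk other_slots two_h.
by set kdeg := (k * mdeg alpha)%N; set rest := (\sum_(j < d | _) _)%N; lia.
Qed.

Lemma split_pairP mm : good_pair mm -> splittable mm ->
  [/\ good_pair (split_pair mm), ~~ splittable (split_pair mm),
      merge_pair (split_pair mm) = mm,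
      nslots ((split_pair mm).1 + (split_pair mm).2) = (nslots (mm.1 + mm.2)).+1
    & slot (split_pair mm).1 ord0 = slot mm.1 ord0].
Proof.
case: mm => m1 m2 /and3P[/= adm nz10 nz2]; rewrite /splittable /=.
have [/eqP tm pre] := andP adm; set h := first_slot m2 => nz1_h.
have [hn nz2_h below2] := first_slotP nz2.
have lt_hl : (h < nslots (m1 + m2))%N by rewrite -(slots_prefixP pre) // slotnD_eq0 nz2_h orbT.
have ln := nslots_shared_slot adm hn nz1_h nz2_h.
have [nz' first' empty' slot0'] := split_slots ln (slots_prefixP pre) lt_hl nz1_h nz2_h below2.
have [pre' nsl'] := slots_prefixI (ln : (nslots (m1 + m2)).+1 <= d)%N nz'.
rewrite /good_pair /splittable /merge_pair /split_pair /= -/h first' /= -!slotn0 slot0'.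
rewrite /admissible tmdegD !tmdeg_mperm -tmdegD tm eqxx pre' mperm_eq0 empty' eqxx.
by rewrite !slotn0 nz10 nz2 nsl' !mperm_insK.
Qed.

Lemma merge_pairP mm : good_pair mm -> ~~ splittable mm ->
  [/\ good_pair (merge_pair mm), splittable (merge_pair mm) & split_pair (merge_pair mm) = mm].
Proof.
case: mm => m1 m2 /and3P[/= adm nz10 nz2]; rewrite /splittable /= negbK.
have [/eqP tm pre] := andP adm; set h := first_slot m2 => /eqP zero1_h.
have [hn nz2_h below2] := first_slotP nz2.
have lt_hl : (h < nslots (m1 + m2))%N by rewrite -(slots_prefixP pre) // slotnD_eq0 nz2_h orbT.
have h_gt0 : (0 < h)%N by rewrite lt0n; apply: contra_neq nz10 => h0; rewrite -slotn0 -h0.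
have [nz' first' nz1' slot0'] :=
  merge_slots (nslots_le _) (slots_prefixP pre) h_gt0 lt_hl zero1_h nz2_h below2.
have [pre' _] := slots_prefixI (leq_trans (leq_pred _) (nslots_le _)) nz'.
rewrite /good_pair /splittable /merge_pair /split_pair /= -/h first' /= -!slotn0 slot0'.
rewrite /admissible tmdegD !tmdeg_mperm -tmdegD tm eqxx pre' mperm_eq0 nz1'.
by rewrite !slotn0 nz10 nz2 (prednK h_gt0) !mperm_delK.
Qed.

End SplitMerge.

Section LinearForm.
Variables (A : comNzRingType) (n r k : nat) (alpha : 'X_{1..r}) (i0 : 'I_r).
Local Notation d := n.+1.
Local Notation N := (nvar d r).
Local Notation ka := (mscale k alpha).
Local Notation admissible := (admissible k alpha).
Implicit Types (m : 'X_{1..N}) (mm : 'X_{1..N} * 'X_{1..N}) (f : tensB A d r).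

Definition weight m : A :=
  if admissible m then (-1) ^+ nslots m * (slot m ord0 i0)%:R else 0.

Definition split_weight m1 m2 : A :=
  if admissible (m1 + m2) then (-1) ^+ nslots (m1 + m2) * (slot m1 ord0 i0)%:R else 0.

Lemma weightD m1 m2 : weight (m1 + m2) = split_weight m1 m2 + split_weight m2 m1.
Proof.
rewrite /weight /split_weight [(m2 + m1)%MM]addmC; case: ifP => _; last by rewrite addr0.
by rewrite slotD mnmDE natrD mulrDr.
Qed.

Lemma weight_admissible m : weight m != 0 -> tmdeg m = ka.
Proof. by rewrite /weight /admissible; case: (tmdeg m =P ka); rewrite ?eqxx. Qed.

Hypothesis hk : (k * mdeg alpha <= d)%N.

Lemma split_weight_split mm : good_pair k alpha mm -> splittable mm ->
  split_weight (split_pair mm).1 (split_pair mm).2 = - split_weight mm.1 mm.2.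
Proof.
move=> good split; have [/and3P[adm' _ _] _ _ nsl' slot0'] := split_pairP hk good split.
have /and3P[adm _ _] := good.
by rewrite /split_weight adm adm' nsl' slot0' exprS mulN1r mulNr.
Qed.

(* [weight] vanishes off multidegree k alpha, so monomials of total degree at most
   k |alpha| suffice. *)
Definition Lform f : A := \sum_(m : 'X_{1..N < (mdeg ka).+1}) f@_m * weight m.

Lemma Lform_is_zmod_morphism : zmod_morphism Lform.
Proof. by move=> f g; rewrite /Lform -sumrB; apply: eq_bigr=> m _; rewrite mcoeffB mulrBl. Qed.

HB.instance Definition _ :=
  GRing.isZmodMorphism.Build (tensB A d r) A Lform Lform_is_zmod_morphism.

Lemma LformZ a f : Lform (a *: f) = a * Lform f.
Proof. by rewrite /Lform mulr_sumr; apply: eq_bigr=> m _; rewrite mcoeffZ mulrA. Qed.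

Lemma Lform_X m : Lform 'X_[m] = weight m.
Proof.
have [/weight_admissible tm|/negPn/eqP w0] := boolP (weight m != 0); last first.
  rewrite w0 /Lform big1 // => m' _.
  by rewrite mcoeffX; case: eqP=> [<-|]; rewrite ?w0 ?mul0r ?mulr0.
have m_lt : (mdeg m < (mdeg ka).+1)%N by rewrite -mdeg_tmdeg tm.
rewrite /Lform (bigD1 (BMultinom m_lt)) //= mcoeffX eqxx mul1r big1 ?addr0 // => m' ne_m'.
rewrite mcoeffX; case: eqP=> [eq_m|]; rewrite ?mul0r //.
by move: ne_m'; rewrite (_ : m' = BMultinom m_lt) ?eqxx //; apply/val_inj.
Qed.

Lemma Lform_mul f g K : (msize f <= K)%N -> (msize g <= K)%N ->
  Lform (f * g) = \sum_(mm : 'X_{1..N < K, K}) f@_mm.1 * g@_mm.2 * weight (mm.1 + mm.2).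
Proof.
move=> szf szg; rewrite (mpolywME szf szg) raddf_sum /=; apply: eq_bigr=> mm _.
by rewrite LformZ Lform_X.
Qed.

Hypotheses (k_gt0 : (0 < k)%N) (alpha_neq0 : alpha != 0%MM).

Lemma Lform_C a : Lform a%:MP = 0.
Proof.
have weight0 : weight 0%MM = 0.
  apply/eqP; apply: contraT => /weight_admissible/(congr1 mdeg)/esym/eqP.
  rewrite mdeg_tmdeg mdeg0 mdeg_mscale muln_eq0 mdeg_eq0 (negbTE alpha_neq0) orbF.
  by rewrite eqn0Ngt k_gt0.
rewrite /Lform big1 // => m _.
by rewrite mcoeffC; case: eqP=> [->|]; rewrite ?weight0 ?mulr0 ?mul0r.
Qed.

Lemma Lform_homog f beta : thomog beta f -> mlt beta ka -> Lform f = 0.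
Proof.
move=> hom_f /andP[_ ne_beta]; rewrite /Lform big1 // => m _.
have [->|nz_m] := eqVneq f@_m 0; first by rewrite mul0r.
have [->|/weight_admissible tm] := eqVneq (weight m) 0; first by rewrite mulr0.
by move: ne_beta; rewrite -(hom_f m) ?tm ?eqxx // mcoeff_msupp.
Qed.

End LinearForm.

Section SignReversingInvolution.
Variables (A : comNzRingType) (n r k : nat) (alpha : 'X_{1..r}) (i0 : 'I_r).
Local Notation d := n.+1.
Local Notation N := (nvar d r).
Hypothesis hk : (k * mdeg alpha <= d)%N.
Variables (u v : tensB A d r) (K : nat).
Hypotheses (sym_u : symmetric_tensor u) (sym_v : symmetric_tensor v) (v0 : v@_0%MM = 0).
Local Notation T := ('X_{1..N < K, K})%type.

Definition bmperm (s : 'S_d) (x : 'X_{1..N < K}) : 'X_{1..N < K} := insubd x (mperm s x).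

Lemma bmnm_bmperm s x : bmnm (bmperm s x) = mperm s x.
Proof. by rewrite insubdK // unfold_in /= mdeg_mperm bmdeg. Qed.

Definition pair_bmnm (mm : T) : 'X_{1..N} * 'X_{1..N} := (bmnm mm.1, bmnm mm.2).

Lemma pair_bmnm_inj : injective pair_bmnm.
Proof. by move=> [x1 x2] [y1 y2] [/val_inj-> /val_inj->]. Qed.

Definition bsplit (mm : T) : T :=
  let h := first_slot mm.2 in (bmperm (ins_slot n h.+1) mm.1, bmperm (ins_slot n h) mm.2).

Definition bmerge (mm : T) : T :=
  let h := first_slot mm.2 in (bmperm (del_slot n h) mm.1, bmperm (del_slot n h.-1) mm.2).

Lemma pair_bmnm_split mm : pair_bmnm (bsplit mm) = split_pair (pair_bmnm mm).
Proof. by rewrite /pair_bmnm /= !bmnm_bmperm. Qed.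

Lemma pair_bmnm_merge mm : pair_bmnm (bmerge mm) = merge_pair (pair_bmnm mm).
Proof. by rewrite /pair_bmnm /= !bmnm_bmperm. Qed.

Lemma split_weight_sum_eq0 :
  \sum_(mm : T) u@_mm.1 * v@_mm.2 * split_weight A k alpha i0 mm.1 mm.2 = 0.
Proof.
apply: (@sum_sign_reversing _ _ (fun mm => good_pair k alpha (pair_bmnm mm))
  (fun mm => splittable (pair_bmnm mm)) bsplit bmerge).
- move=> [m1 m2]; rewrite /good_pair /split_weight /=; case: ifP => _; last by rewrite mulr0.
  rewrite andTb negb_and !negbK => /orP[/eqP slot0_0|/eqP m2_0].
    by rewrite slot0_0 mnm0E !mulr0.
  by rewrite m2_0 v0 mulr0 mul0r.
- move=> x good split; have [good' unsplit' back _ _] := split_pairP hk good split.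
  have weight' := split_weight_split A i0 hk good split.
  rewrite -pair_bmnm_split /= in good' unsplit' back weight'; split=> //.
    by apply: pair_bmnm_inj; rewrite pair_bmnm_merge.
  by rewrite weight' mulrN !bmnm_bmperm !mcoeff_mperm.
- move=> y good unsplit; have [good' split' back] := merge_pairP good unsplit.
  rewrite -pair_bmnm_merge in good' split' back; split=> //.
  by apply: pair_bmnm_inj; rewrite pair_bmnm_split.
Qed.

End SignReversingInvolution.

Section LformVanishes.
Variables (A : comNzRingType) (n r k : nat) (alpha : 'X_{1..r}) (i0 : 'I_r).
Local Notation d := n.+1.
Local Notation N := (nvar d r).
Local Notation Lform := (@Lform A n r k alpha i0).
Hypotheses (hk : (k * mdeg alpha <= d)%N) (k_gt0 : (0 < k)%N) (alpha_neq0 : alpha != 0%MM).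
Implicit Types (p q : tensB A d r).

Lemma Lform_mul_eq0 p q : symmetric_tensor p -> symmetric_tensor q ->
  p@_0%MM = 0 -> q@_0%MM = 0 -> Lform (p * q) = 0.
Proof.
move=> sym_p sym_q p0 q0; pose K := maxn (msize p) (msize q).
rewrite (@Lform_mul _ _ _ _ _ _ _ _ K) ?leq_maxl ?leq_maxr //.
under eq_bigr => mm _ do rewrite weightD mulrDr.
rewrite big_split /= split_weight_sum_eq0 // add0r.
have swap_inj : injective (fun mm : 'X_{1..N < K, K} => (mm.2, mm.1)).
  by move=> [? ?] [? ?] [-> ->].
rewrite (reindex_inj swap_inj) -[RHS](split_weight_sum_eq0 i0 hk K sym_q sym_p p0).
by apply: eq_bigr => mm _; congr (_ * _); exact: mulrC.
Qed.

Lemma Lform_mul_symmetric p q : symmetric_tensor p -> symmetric_tensor q ->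
  Lform p = 0 -> Lform q = 0 -> Lform (p * q) = 0.
Proof.
pose reduce (f : tensB A d r) := f - (f@_0%MM)%:MP.
have reduce_sym f : symmetric_tensor f -> symmetric_tensor (reduce f).
  by move=> sym_f s; rewrite rmorphB /= sym_f slot_permC.
have reduce0 f : (reduce f)@_0%MM = 0 by rewrite mcoeffB mcoeffC eqxx mulr1 subrr.
have Lform_reduce f : Lform f = 0 -> Lform (reduce f) = 0.
  by move=> Lf; rewrite raddfB /= Lf Lform_C ?subrr.
move=> sym_p sym_q Lp Lq.
have -> : p * q = (reduce p + (p@_0%MM)%:MP) * (reduce q + (q@_0%MM)%:MP) by rewrite !subrK.
move: (reduce_sym _ sym_p) (reduce_sym _ sym_q) (reduce0 p) (reduce0 q).
move: (Lform_reduce _ Lp) (Lform_reduce _ Lq) => /=.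
move: (reduce p) (reduce q) => p' q' Lp' Lq' sym_p' sym_q' p'0 q'0.
rewrite mulrDl !mulrDr !raddfD /= Lform_mul_eq0 // -rmorphM /= Lform_C //.
by rewrite [p' * _]mulrC !mul_mpolyC !LformZ Lp' Lq' !mulr0 !addr0.
Qed.

Lemma Lform_Gamma_lt f : Gamma_lt (mscale k alpha) f -> symmetric_tensor f /\ Lform f = 0.
Proof.
elim=> {f} [a|p [sym_p [beta [hom lt_beta]]]|p q _ [sym_p Lp] _ [sym_q Lq]|
             p q _ [sym_p Lp] _ [sym_q Lq]].
- by split; [move=> s; rewrite slot_permC | exact: Lform_C].
- by split=> //; exact: Lform_homog hom lt_beta.
- by split; [move=> s; rewrite rmorphD /= sym_p sym_q | rewrite raddfD /= Lp Lq addr0].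
- by split; [move=> s; rewrite rmorphM /= sym_p sym_q | exact: Lform_mul_symmetric].
Qed.

End LformVanishes.

Section GammaProduct.
Variables (A : comNzRingType) (n r k : nat) (alpha : 'X_{1..r}) (i0 : 'I_r).
Local Notation d := n.+1.
Local Notation N := (nvar d r).
Hypotheses (hk : (k * mdeg alpha <= d)%N) (k_gt0 : (0 < k)%N) (alpha_neq0 : alpha != 0%MM).

Lemma mpolyX_of_slots (F : 'I_d -> 'X_{1..r}) :
  ('X_[of_slots F] : tensB A d r) = \prod_(j < d) \prod_(i < r) tvar A j i ^+ F j i.
Proof.
rewrite mpolyXE_id (reindex (@enum_rank ('I_d * 'I_r)%type)) /=; last first.
  by exists enum_val=> x _; rewrite ?enum_rankK ?enum_valK.
by rewrite pair_bigA; apply: eq_bigr=> -[j i] _; rewrite mnmE enum_rankK.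
Qed.

Definition subset_mono (S : {set 'I_d}) : 'X_{1..N} :=
  of_slots (fun j => if j \in S then alpha else 0%MM).

Lemma gamma_prodE :
  @gamma_prod A d r k alpha = \sum_(S : {set 'I_d} | #|S| == k) 'X_[subset_mono S].
Proof.
apply: eq_bigr=> S _; rewrite mpolyX_of_slots (big_mkcond (fun j => j \in S)) /=.
apply: eq_bigr=> j _; case: ifP=> // _.
by rewrite big1 // => i _; rewrite mnm0E expr0.
Qed.

Lemma slot_subset_mono_eq0 (S : {set 'I_d}) j : (slot (subset_mono S) j != 0%MM) = (j \in S).
Proof. by rewrite slot_of_slots; case: ifP; rewrite ?eqxx. Qed.

Lemma weight_subset_mono (S : {set 'I_d}) : #|S| = k ->
  weight A k alpha i0 (subset_mono S) =
  if S == [set j : 'I_d | (j < k)%N] then (-1) ^+ k * (alpha i0)%:R else 0.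
Proof.
move=> card_S.
have nsl : nslots (subset_mono S) = k.
  by rewrite /nslots -card_S; apply: eq_card=> j; rewrite inE /= slot_subset_mono_eq0.
have tm : tmdeg (subset_mono S) = mscale k alpha.
  rewrite tmdegE; apply/mnmP=> i; rewrite mnm_sumE mnmE.
  rewrite (eq_bigr (fun j => if j \in S then alpha i else 0%N)); last first.
    by move=> j _; rewrite slot_of_slots; case: ifP; rewrite ?mnm0E.
  by rewrite -big_mkcond /= sum_nat_const card_S.
have prefix_init : slots_prefix (subset_mono S) = (S == [set j : 'I_d | (j < k)%N]).
  apply/forallP/eqP=> [pre|eq_S]; last by move=> j; rewrite nsl slot_subset_mono_eq0 eq_S inE.
  by apply/setP=> j; have /eqP := pre j; rewrite nsl slot_subset_mono_eq0 inE.
rewrite /weight /admissible tm eqxx prefix_init nsl; case: eqP => // ->.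
by rewrite slot_of_slots inE k_gt0.
Qed.

Lemma Lform_gamma_prod :
  Lform k alpha i0 (@gamma_prod A d r k alpha) = (-1) ^+ k * (alpha i0)%:R.
Proof.
have kd : (k <= d)%N by apply: leq_trans hk; rewrite leq_pmulr // lt0n mdeg_eq0.
have card_init : #|[set j : 'I_d | (j < k)%N]| = k by rewrite cardsE card_ord_lt.
rewrite gamma_prodE raddf_sum (bigD1 [set j : 'I_d | (j < k)%N]) /=; last first.
  by rewrite card_init.
rewrite Lform_X weight_subset_mono // eqxx big1 ?addr0 // => S /andP[/eqP card_S ne_S].
by rewrite Lform_X weight_subset_mono // (negbTE ne_S).
Qed.

End GammaProduct.

Unset Implicit Arguments.

Theorem corollary7p14 (A : comNzRingType) (r d k : nat) (alpha : 'X_{1..r}) :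
  (1 <= r)%N -> (1 <= d)%N -> (1 <= k)%N ->
  alpha != 0%MM ->
  (exists u : A, u * (\big[gcdn/0%N]_(i < r) alpha i)%:R = 1) ->
  (k * mdeg alpha <= d)%N ->
  ~ Gamma_lt (mscale k alpha) (@gamma_prod A d r k alpha).
Proof.
move=> _ d_gt0 k_gt0 alpha_neq0 [c gcd_unit] hk gamma_lt.
have [i0 alpha_i0|alpha_zero] := pickP (fun i : 'I_r => (alpha i)%:R != 0 :> A); last first.
  move: gcd_unit; rewrite natr_big_gcdn_eq0 => [|i]; last exact/eqP/negbFE/alpha_zero.
  by rewrite mulr0 => /eqP; rewrite eq_sym oner_eq0.
case: d d_gt0 hk gamma_lt => // n _ hk gamma_lt.
have [_] := Lform_Gamma_lt i0 hk k_gt0 alpha_neq0 gamma_lt.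
rewrite Lform_gamma_prod // => /(congr1 ( *%R ((-1) ^+ k))).
by rewrite signrMK mulr0 => /eqP; rewrite (negbTE alpha_i0).
Qed.
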